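(* Let $D\subset\mathbb{C}^n$ be a hyperconvex domain, $\mathscr{P}=\big(\{\mathbf{z}_i\}_{i=1}^p,\{\mathbf{f}_{0,i}\}_{i=1}^p,\{u_{0,i}\}_{i=1}^p\big)$ a priori data on $D$, and $\Phi^D_{\mathscr{P},\max}$ a global Zhou weight related to $\mathscr{P}$ on $D$. Then for every $z\in D$, $$\Phi^D_{\mathscr{P},\max}(z)=\sup\big\{\phi(z):\phi\in\mathrm{PSH}^-(D),\ (\mathbf{f}_{0,i},\mathbf{z}_i)\notin\mathcal{I}(u_{0,i}+\phi)_{\mathbf{z}_i}\text{ and }\phi\ge\Phi^D_{\mathscr{P},\max}+O(1)\text{ near }\mathbf{z}_i,\ \forall i=1,\dots,p\big\}.$$
   Context: $\mathrm{PSH}^-(D)$: negative plurisubharmonic functions on $D$. Hyperconvex: admits a continuous plurisubharmonic exhaustion $\varrho:D\to(-\infty,0)$. $\mathcal{I}(u)_z=\{(f,z)\in\mathcal O_z:|f|^2e^{-2u}\text{ integrable near }z\}$; for a holomorphic vector $\mathbf f$, $|\mathbf f|^2=\sum_j|f_j|^2$ and $(\mathbf f,z)\notin\mathcal{I}(u)_z$ means $|\mathbf f|^2e^{-2u}$ is not integrable near $z$. A priori data $\mathscr{P}$: distinct $\mathbf{z}_1,\dots,\mathbf{z}_p\in D$, holomorphic vectors $\mathbf{f}_{0,i}$ near $\mathbf{z}_i$, plurisubharmonic $u_{0,i}$ near $\mathbf{z}_i$ with $|\mathbf{f}_{0,i}|^2e^{-2u_{0,i}}$ integrable near $\mathbf{z}_i$.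 Global Zhou weight related to $\mathscr{P}$ on $D$: $\Phi\in\mathrm{PSH}^-(D)$ such that (1) for large $N_i$, $|\mathbf{f}_{0,i}|^2e^{-2u_{0,i}}|z-\mathbf{z}_i|^{2N_i}e^{-2\Phi}$ is integrable near $\mathbf{z}_i$ for all $i$; (2) $|\mathbf{f}_{0,i}|^2e^{-2u_{0,i}-2\Phi}$ is not integrable near $\mathbf{z}_i$ for all $i$; (3) any $\Psi\in\mathrm{PSH}^-(D)$ with $\Psi\ge\Phi$ and $|\mathbf{f}_{0,i}|^2e^{-2u_{0,i}-2\Psi}$ non-integrable near every $\mathbf{z}_i$ equals $\Phi$ on $D$. *)

From HB Require Import structures.
From mathcomp Require Import all_boot all_order all_algebra.
From mathcomp Require Import all_classical all_reals all_analysis.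
Set Implicit Arguments. Unset Strict Implicit. Unset Printing Implicit Defensive.
Import Order.TTheory GRing.Theory Num.Theory.
Import numFieldNormedType.Exports.
Local Open Scope classical_set_scope.
Local Open Scope ring_scope.

Section Defs.
Variables (R : realType) (n : nat).

(* C^n, a point z = x + i y is represented by the pair (x, y) of real row vectors *)
Definition Cn := ('rV[R]_n * 'rV[R]_n)%type.

(* multiplication by the complex scalar a + i b on C^n *)
Definition cscale (a b : R) (z : Cn) : Cn :=
  (a *: z.1 - b *: z.2, b *: z.1 + a *: z.2).
(* multiplication by i on C = R * R *)
Definition imulC (w : R * R) : R * R := (- w.2, w.1).

Definition cnorm2 (z : Cn) : R := \sum_(j < n) (z.1 ord0 j ^+ 2 + z.2 ord0 j ^+ 2).

(* holomorphic on an open set U: complex (Frechet) differentiable,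
   i.e. real differentiable with C-linear differential *)
Definition holomorphic_on (U : set Cn) (f : Cn -> R * R) :=
  open U /\ forall z, U z ->
    differentiable f z /\ forall h : Cn, 'd f z (cscale 0 1 h) = imulC ('d f z h).

Definition usc_on (U : set Cn) (u : Cn -> \bar R) :=
  forall z, U z -> forall c : R, (u z < c%:E)%E ->
    \forall w \near z, (u w < c%:E)%E.

Definition psh_on (U : set Cn) (u : Cn -> \bar R) :=
  [/\ open U,
      (forall z, U z -> u z != +oo%E),
      usc_on U u,
      (exists z, U z /\ u z != -oo%E) &
      (forall a b : Cn,
         (forall al be : R, al ^+ 2 + be ^+ 2 <= 1 -> U (a + cscale al be b)) ->
         (u a <= ((2 * pi)^-1)%:E *
            \int[@lebesgue_measure R]_(t in `[0%R, (2 * pi)%R]) u ((a + cscale (cos t) (sin t) b)%R))%E)].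

Definition PSHneg (D : set Cn) (u : Cn -> \bar R) :=
  psh_on D u /\ forall z, D z -> (u z <= 0)%E.

Definition psh_near (z : Cn) (u : Cn -> \bar R) :=
  exists r : R, 0 < r /\ psh_on (ball z r) u.

Definition holomorphic_near (z : Cn) (f : Cn -> R * R) :=
  exists U, nbhs z U /\ holomorphic_on U f.

Definition domain (D : set Cn) := [/\ open D, connected D & D !=set0].

Definition hyperconvex (D : set Cn) :=
  domain D /\
  exists rho : Cn -> R,
    [/\ {within D, continuous rho},
        psh_on D (fun z => (rho z)%:E),
        (forall z, D z -> rho z < 0) &
        (forall c : R, c < 0 -> exists K : set Cn,
            [/\ compact K, K `<=` D & [set z | D z /\ rho z < c] `<=` K])].

(* Lebesgue integral of a nonnegative function on R^m, computed as an iterated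
   integral (Tonelli) with the one-dimensional Lebesgue measure *)
Fixpoint iter_int (m : nat) (F : (nat -> R) -> \bar R) : \bar R :=
  match m with
  | 0 => F (fun _ => 0)
  | m'.+1 => (\int[@lebesgue_measure R]_t
               iter_int m' (fun v => F (fun k => if k is k'.+1 then v k' else t)))%E
  end.

Definition Cn_of (v : nat -> R) : Cn := (\row_j v j, \row_j v (n + j)%N).

Definition cn_integral (g : Cn -> \bar R) : \bar R :=
  iter_int (n + n) (fun v => g (Cn_of v)).

Definition integrable_near (z : Cn) (g : Cn -> \bar R) :=
  exists V, nbhs z V /\ (cn_integral (fun w => (\1_V w)%:E * g w) < +oo)%E.

Definition vnorm2 (k : nat) (f : nat -> Cn -> R * R) (w : Cn) : R :=
  \sum_(j < k) ((f j w).1 ^+ 2 + (f j w).2 ^+ 2).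

Definition wdens (k : nat) (f : nat -> Cn -> R * R) (v : Cn -> \bar R) (w : Cn) : \bar R :=
  ((vnorm2 k f w)%:E * expeR (- (2%:E * v w)))%E.

Definition apriori_data (D : set Cn) (p : nat) (zs : 'I_p -> Cn) (k : 'I_p -> nat)
    (f0 : 'I_p -> nat -> Cn -> R * R) (u0 : 'I_p -> Cn -> \bar R) :=
  [/\ injective zs,
      (forall i, D (zs i)),
      (forall i (j : nat), (j < k i)%N -> holomorphic_near (zs i) (f0 i j)),
      (forall i, psh_near (zs i) (u0 i)) &
      (forall i, integrable_near (zs i) (wdens (k i) (f0 i) (u0 i)))].

Definition global_zhou_weight (D : set Cn) (p : nat) (zs : 'I_p -> Cn) (k : 'I_p -> nat)
    (f0 : 'I_p -> nat -> Cn -> R * R) (u0 : 'I_p -> Cn -> \bar R) (Phi : Cn -> \bar R) :=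
  [/\ PSHneg D Phi,
      (forall i, exists N0 : nat, forall N : nat, (N0 <= N)%N ->
         integrable_near (zs i)
           (fun w => ((cnorm2 (w - zs i) ^+ N)%:E *
                      wdens (k i) (f0 i) (fun w => u0 i w + Phi w)%E w)%E)),
      (forall i, ~ integrable_near (zs i) (wdens (k i) (f0 i) (fun w => u0 i w + Phi w)%E)) &
      (forall Psi, PSHneg D Psi -> (forall z, D z -> (Phi z <= Psi z)%E) ->
         (forall i, ~ integrable_near (zs i) (wdens (k i) (f0 i) (fun w => u0 i w + Psi w)%E)) ->
         forall z, D z -> Psi z = Phi z)].

End Defs.

(** [Phi] is itself admissible (with [C = 0]), which gives [<=].
    Conversely, for an admissible [phi] the function [M := max phi Phi] is a
    negative psh function above [Phi]; near each [z_i] we have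
    [phi <= M <= phi + c], so [|f|^2 e^(-2(u+phi)) <= e^(2c) |f|^2 e^(-2(u+M))]
    and [M] inherits the non-integrability of [phi].  Maximality of the Zhou
    weight forces [M = Phi], i.e. [phi <= Phi]. *)
From HB Require Import structures.
From mathcomp Require Import all_boot all_order all_algebra.
From mathcomp Require Import all_classical all_reals all_analysis.
From mathcomp Require Import lra.
Import Order.TTheory GRing.Theory Num.Theory.
Import numFieldNormedType.Exports.
Import HBNNSimple.
Local Open Scope classical_set_scope.
Local Open Scope ring_scope.
Local Open Scope ereal_scope.

(** The integrands below (e.g. a psh function along a circle) are not known
    to be measurable, so the monotonicity and homogeneity of the integral are
    proved directly from its definition as a supremum of simple integrals. *)
Section integral_nonmeasurable.
Context {d} {T : measurableType d} {R : realType} (mu : {measure set T -> \bar R}).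

Lemma ge0_le_integral_nonmeas (D : set T) (f g : T -> \bar R) :
  (forall x, D x -> 0 <= f x) -> (forall x, D x -> f x <= g x) ->
  \int[mu]_(x in D) f x <= \int[mu]_(x in D) g x.
Proof.
move=> f0 fg.
have g0 x : D x -> 0 <= g x by move=> Dx; exact: le_trans (f0 _ Dx) (fg _ Dx).
rewrite (ge0_integralE _ f0) (ge0_integralE _ g0).
apply: ge_ereal_sup => _ [h hf <-]; apply: ereal_sup_ubound; exists h => //= x.
apply: le_trans (hf x) _; rewrite /patch; case: ifP => // /set_mem Dx; exact: fg.
Qed.

Lemma le_integral_nonmeas (D : set T) (f g : T -> \bar R) :
  (forall x, D x -> f x <= g x) ->
  \int[mu]_(x in D) f x <= \int[mu]_(x in D) g x.
Proof.
move=> fg; rewrite (integralE _ _ f) (integralE _ _ g); apply: leeB.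
  apply: ge0_le_integral_nonmeas => x Dx; first exact: funepos_ge0.
  by rewrite !funeposE; exact: le_max2 (fg _ Dx) (lexx _).
apply: ge0_le_integral_nonmeas => x Dx; first exact: funeneg_ge0.
by rewrite !funenegE; apply: le_max2 (lexx _); rewrite leeN2 fg.
Qed.

Lemma ge0_integralZl_le (g : T -> \bar R) (r : R) : (0 < r)%R ->
  (forall x, 0 <= g x) -> \int[mu]_x (r%:E * g x) <= r%:E * \int[mu]_x g x.
Proof.
move=> r0 g0.
have rg0 x : setT x -> 0 <= r%:E * g x by move=> _; rewrite mule_ge0 // lee_fin ltW.
rewrite (ge0_integralE _ rg0) (ge0_integralE _ (fun x _ => g0 x)) !patch_setT.
apply: ge_ereal_sup => _ [h hrg <-].
have rV0 : (0 <= r^-1)%R by rewrite invr_ge0 ltW.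
pose h' := scale_nnsfun h rV0.
have -> : sintegral mu h = r%:E * sintegral mu h'.
  rewrite -sintegralrM; apply: eq_sintegral => x /=.
  by rewrite mulrA divff ?mul1r // gt_eqF.
rewrite lee_pmul2l //= ?lte_fin //.
apply: ereal_sup_ubound; exists h' => //= x.
by rewrite EFinM lee_pdivrMl //; exact: hrg.
Qed.

End integral_nonmeasurable.

Section iterated_integral.
Context {R : realType}.

Lemma iter_int_ge0 m (F : (nat -> R) -> \bar R) :
  (forall v, 0 <= F v) -> 0 <= iter_int m F.
Proof.
elim: m F => [|m IH] F F0 /=; first exact: F0.
by apply: integral_ge0 => t _; apply: IH.
Qed.

Lemma iter_int_le_scale m (F G : (nat -> R) -> \bar R) (r : R) : (0 < r)%R ->
  (forall v, 0 <= F v) -> (forall v, 0 <= G v) ->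
  (forall v, F v <= r%:E * G v) -> iter_int m F <= r%:E * iter_int m G.
Proof.
move=> r0; elim: m F G => [|m IH] F G F0 G0 FG /=; first exact: FG.
pose g t := iter_int m (fun v => G (fun k => if k is k'.+1 then v k' else t)).
apply: le_trans; last exact: ge0_integralZl_le lebesgue_measure g r r0
  (fun t => iter_int_ge0 _ _ (fun v => G0 _)).
by apply: ge0_le_integral_nonmeas => t _; [exact: iter_int_ge0 | exact: IH].
Qed.

End iterated_integral.

Lemma integrable_near_le_scale {R : realType} {n : nat} {z : Cn R n}
    {g h : Cn R n -> \bar R} (r : R) (U : set (Cn R n)) :
  (0 < r)%R -> (forall w, 0 <= g w) -> (forall w, 0 <= h w) ->
  nbhs z U -> (forall w, U w -> g w <= r%:E * h w) ->
  integrable_near z h -> integrable_near z g.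
Proof.
move=> r0 g0 h0 zU gh [V [zV hV]].
have ind_ge0 (A : set (Cn R n)) (f : Cn R n -> \bar R) w :
    (forall w, 0 <= f w) -> 0 <= (\1_A w)%:E * f w.
  by move=> f0; rewrite mule_ge0 // lee_fin indicE.
exists (V `&` U); split; first exact: filterI.
apply: le_lt_trans (_ : _ <= r%:E * cn_integral (fun w => (\1_V w)%:E * h w)) _.
  apply: iter_int_le_scale => // [v|v|v]; rewrite ?ind_ge0 //.
  rewrite !indicE; case: (boolP (Cn_of n v \in _)) => [/set_mem [Vv Uv]|_].
    by rewrite mem_set // !mul1e gh.
  by rewrite mul0e mule_ge0 ?ind_ge0 // lee_fin ltW.
have : 0 <= cn_integral (fun w => (\1_V w)%:E * h w).
  by apply: iter_int_ge0 => v; rewrite ind_ge0.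
by move: hV; case: (cn_integral _) => //= x _ _; rewrite ltry.
Qed.

Lemma vnorm2_ge0 (R : realType) (n k : nat) (f : nat -> Cn R n -> R * R)
    (w : Cn R n) :
  (0 <= vnorm2 k f w)%R.
Proof. by apply: sumr_ge0 => j _; rewrite addr_ge0 // sqr_ge0. Qed.

Lemma wdens_ge0 (R : realType) (n k : nat) (f : nat -> Cn R n -> R * R)
    (v : Cn R n -> \bar R) (w : Cn R n) :
  0 <= wdens k f v w.
Proof. by rewrite /wdens mule_ge0 ?expeR_ge0 // lee_fin vnorm2_ge0. Qed.

Lemma expeR_N2_le_shift (R : realType) (u a b : \bar R) (c : R) :
  (0 <= c)%R -> a <= b -> b <= a + c%:E ->
  expeR (- (2%:E * (u + a))) <= (expR (2 * c))%:E * expeR (- (2%:E * (u + b))).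
Proof.
move=> c0; have e1 : (1 <= expR (2 * c))%R by rewrite -expR0 ler_expR mulr_ge0.
case: u => [u||]; case: a => [a||]; case: b => [b||] // ab bac.
  by move: ab bac => /=; rewrite !lee_fin -expRD ler_expR; lra.
all: by apply: lee_pemull; rewrite ?expeR_ge0 ?lee_fin.
Qed.

Lemma lee_max_shift (R : realType) (a P : \bar R) (C : R) :
  P + C%:E <= a -> maxe a P <= a + (Num.max 0 (- C))%:E.
Proof.
move=> PCa; rewrite ge_max leeDl ?lee_fin ?le_max ?lexx //=.
move: PCa; case: a => [a||]; case: P => [P||]; rewrite ?leey ?leNye //.
have : (- C <= Num.max 0 (- C))%R by rewrite le_max lexx orbT.
by rewrite -!EFinD !lee_fin; lra.
Qed.

Lemma wdens_le_shift (R : realType) (n k : nat) (f : nat -> Cn R n -> R * R)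
    (u a b : Cn R n -> \bar R) (c : R) (w : Cn R n) :
  (0 <= c)%R -> a w <= b w -> b w <= a w + c%:E ->
  wdens k f (fun w => u w + a w) w
    <= (expR (2 * c))%:E * wdens k f (fun w => u w + b w) w.
Proof.
move=> c0 ab bac; rewrite /wdens muleCA lee_wpmul2l ?lee_fin ?vnorm2_ge0 //.
exact: expeR_N2_le_shift.
Qed.

Section psh_max.
Context {R : realType} {n : nat} {U : set (Cn R n)}.

Lemma psh_on_max {u v : Cn R n -> \bar R} :
  psh_on U u -> psh_on U v -> psh_on U (fun w => maxe (u w) (v w)).
Proof.
case=> oU uoo uusc [z0 [Uz0 uz0]] umean; case=> _ voo vusc _ vmean; split => //.
- by move=> z Uz /=; have [_|_] := leP (u z) (v z); [exact: voo | exact: uoo].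
- move=> z Uz c /=; rewrite gt_max => /andP[hu hv].
  by apply: filterS2 (uusc z Uz c hu) (vusc z Uz c hv) => w h1 h2; rewrite gt_max h1 h2.
- exists z0; split => //; apply: contra uz0 => /eqP h.
  by rewrite -leeNy_eq -h le_max lexx.
- have pi0 : (0 <= ((2 * pi)^-1 : R))%R by rewrite invr_ge0 mulr_ge0 // pi_ge0.
  move=> a b hab /=; rewrite ge_max; apply/andP; split.
  + apply: le_trans (umean a b hab) _; apply: lee_wpmul2l; rewrite ?lee_fin //.
    by apply: le_integral_nonmeas => t _; rewrite le_max lexx.
  + apply: le_trans (vmean a b hab) _; apply: lee_wpmul2l; rewrite ?lee_fin //.
    by apply: le_integral_nonmeas => t _; rewrite le_max lexx orbT.
Qed.

Lemma PSHneg_max {u v : Cn R n -> \bar R} :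
  PSHneg U u -> PSHneg U v -> PSHneg U (fun w => maxe (u w) (v w)).
Proof.
move=> [uP u0] [vP v0]; split; first exact: psh_on_max.
by move=> w Uw; rewrite ge_max u0 // v0.
Qed.

End psh_max.

Theorem corollary1p8 (R : realType) (n p : nat) (D : set (Cn R n))
    (zs : 'I_p -> Cn R n) (k : 'I_p -> nat)
    (f0 : 'I_p -> nat -> Cn R n -> R * R) (u0 : 'I_p -> Cn R n -> \bar R)
    (Phi : Cn R n -> \bar R) :
  hyperconvex D ->
  apriori_data D zs k f0 u0 ->
  global_zhou_weight D zs k f0 u0 Phi ->
  forall z, D z ->
    Phi z = ereal_sup [set phi z | phi in
      [set phi : Cn R n -> \bar R | PSHneg D phi /\
        forall i : 'I_p,
          ~ integrable_near (zs i) (wdens (k i) (f0 i) (fun w => u0 i w + phi w)%E) /\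
          exists C : R, exists V, nbhs (zs i) V /\
            forall w, V w -> D w -> (Phi w + C%:E <= phi w)%E]].
Proof.
move=> [[oD _ _] _] [_ Dzs _ _ _] [PhiN _ Phi_nonint Phi_max] z Dz.
apply/eqP; rewrite eq_le; apply/andP; split.
  apply: ereal_sup_ubound; exists Phi => //; split => // i; split; first exact: Phi_nonint.
  by exists 0%R, setT; split; [exact: filterT | move=> w _ _; rewrite adde0].
apply: ge_ereal_sup => _ [phi [phiN phi_adm] <-].
pose M w := maxe (phi w) (Phi w).
have M_nonint i : ~ integrable_near (zs i) (wdens (k i) (f0 i) (fun w => u0 i w + M w)).
  have [phi_nonint [C [V [zV phiC]]]] := phi_adm i.
  move=> M_int; apply: phi_nonint; move: M_int.
  apply: (integrable_near_le_scale (expR (2 * Num.max 0 (- C)))%R (V `&` D)).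
  - exact: expR_gt0.
  - exact: wdens_ge0.
  - exact: wdens_ge0.
  - by apply: filterI => //; apply: open_nbhs_nbhs; split => //; exact: Dzs.
  move=> w [Vw Dw]; apply: wdens_le_shift; first by rewrite le_max lexx.
    by rewrite /M le_max lexx.
  exact: lee_max_shift (phiC w Vw Dw).
have M_Phi w : D w -> Phi w <= M w by move=> _; rewrite /M le_max lexx orbT.
have MN : PSHneg D M := PSHneg_max phiN PhiN.
by rewrite -(Phi_max M MN M_Phi M_nonint z Dz) /M le_max lexx.
Qed.
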